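(* Let $\mathcal{L}$ be a Prob-solvable loop with guard polynomial $G$, and let $E_i:=\mathbb{E}(-G_{i+1}+G_i\mid\mathcal{F}_i)$. Suppose: (i) $u$ is an upper bounding function for $E$ and there exist $\kappa>0$ and $i_1$ with $u(i)\le-\kappa$ for all $i\ge i_1$; (ii) $\mathbb{P}(\mathit{Guard}_i)>0$ for every $i\in\mathbb{N}$; (iii) for every branch $B$ of $-G$ there is an absolute bounding function $c_B$ for the expression $B+G$, and there are a constant $C$ and $i_2$ with $c_B(i)\le C$ for all branches $B$ and all $i\ge i_2$. Then $M:=-G$ satisfies the conditions of the relaxed Repulsing-AST-rule: there exist $i_0\in\mathbb{N}$, $\epsilon>0$, $c>0$ with $\mathbb{P}(M_{i_0}<0)>0$ and, for all $i\ge i_0$ almost surely, $\neg\mathit{Guard}_i\implies M_i\ge0$, $\mathit{Guard}_i\implies\mathbb{E}(M_{i+1}-M_i\mid\mathcal{F}_i)\le-\epsilon$, and $|M_{i+1}-M_i|<c$. Consequently $\mathcal{L}$ is not AST.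
   Context: A Prob-solvable loop $\mathcal{L}$ with real-valued variables $x_{(1)},\dots,x_{(m)}$ consists of an initialization $x_{(j)}:=r_{(j)}\in\mathbb{R}$, a guard $P>Q$ with $P,Q$ real polynomials, and a loop body that, for $j=1,\dots,m$ in order, sets $x_{(j)}$ to $a_{(jk)}x_{(j)}+P_{(jk)}$ with probability $p_{jk}$ ($k<l_j$) or to the last alternative with the remaining probability (independent choices), where $a_{(jk)}\ge0$, $P_{(jk)}\in\mathbb{R}[x_{(1)},\dots,x_{(j-1)}]$ evaluated at already-updated values, $p_{jk}\in[0,1]$, $\sum_k p_{jk}<1$. $G:=P-Q$. The loop space $(\Omega,\Sigma,(\mathcal{F}_i),\mathbb{P})$: $\Omega=(\mathbb{R}^m)^\omega$, $\mathcal{F}_i$ generated by cylinder sets of prefixes of length $i+1$; under $\mathbb{P}$ the first state is the initial state and each next state results from one execution of the body if the guard holds, otherwise it repeats the current state. $E_i(\vartheta):=E(\vartheta_i)$; $\mathit{Guard}_i$ is the event $G_i>0$; $T:=\inf\{i:G_i\le0\}$; $\mathcal{L}$ is AST if $\mathbb{P}(T<\infty)=1$. Branches: for a polynomial $H$, each choice vector $\kappa$ of alternatives gives a polynomial $B_\kappa$ with $H(s')=B_\kappa(s)$ when the body is executed from $s$ with these choices, with probability the product of the chosen alternatives' probabilities; the branches of $H$ are the polynomials $B$ whose total probability (summed over $\kappa$ with $B_\kappa=B$) is positive. An upper bounding function for an expression $E$ is a monotone $u:\mathbb{N}\to\mathbb{R}$, everywhere non-negative or everywhere non-positive, such that for some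 $\alpha>0$ and all sufficiently large $i$, $\mathbb{P}(E_i\le\alpha\,u(i)\mid T>i)=1$. An absolute bounding function for $E$ is an upper bounding function for $|E|$. *)

From mathcomp Require Import all_boot all_order all_algebra.
From mathcomp Require Import reals.
From mathcomp Require Import mpoly.



Unset Printing Implicit Defensive.

Import Order.TTheory GRing.Theory Num.Theory.
Local Open Scope ring_scope.

(* For variable j there are [nalt j] = l_j alternatives; alternative k sets  *)
(*   x_(j) := acoef j k * x_(j) + upd j k                                    *)
(* with probability [prb j k] if k < l_j - 1, and the last alternative gets  *)
(* the remaining probability.                                                *)
Record loop (R : realType) (m : nat) := Loop {
  init  : 'I_m -> R;
  gP    : {mpoly R[m]};
  gQ    : {mpoly R[m]};
  nalt  : 'I_m -> nat;
  acoef : forall j : 'I_m, 'I_(nalt j) -> R;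
  upd   : forall j : 'I_m, 'I_(nalt j) -> {mpoly R[m]};
  prb   : forall j : 'I_m, 'I_(nalt j) -> R }.

Arguments init {R m} _ _.
Arguments gP {R m} _.
Arguments gQ {R m} _.
Arguments nalt {R m} _ _.
Arguments acoef {R m} _ j _.
Arguments upd {R m} _ j _.
Arguments prb {R m} _ j _.

Section Loop.
Variables (R : realType) (m : nat) (L : loop R m).

Definition altprob (j : 'I_m) (k : 'I_(nalt L j)) : R :=
  if (k.+1 < nalt L j)%N then prb L j k
  else 1 - \sum_(k' < nalt L j | (k'.+1 < nalt L j)%N) prb L j k'.

Definition only_vars_below (j : nat) (p : {mpoly R[m]}) : Prop :=
  forall mon, mon \in msupp p -> forall i : 'I_m, (j <= i)%N -> mon i = 0%N.

Definition prob_solvable : Prop :=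
  [/\ forall j, (0 < nalt L j)%N,
      forall j k, 0 <= acoef L j k,
      forall j (k : 'I_(nalt L j)), (k.+1 < nalt L j)%N -> 0 <= prb L j k <= 1,
      forall j, \sum_(k' < nalt L j | (k'.+1 < nalt L j)%N) prb L j k' < 1
    & forall (j : 'I_m) k, only_vars_below j (upd L j k)].

Definition G : {mpoly R[m]} := gP L - gQ L.

Definition state := {ffun 'I_m -> R}.
Definition evalp (p : {mpoly R[m]}) (s : state) : R := meval (fun i => s i) p.

Definition choice := {dffun forall j : 'I_m, 'I_(nalt L j)}.
Definition kprob (kap : choice) : R := \prod_(j < m) altprob j (kap j).

Fixpoint exec_upto (kap : choice) (n : nat) (s : state) : state :=
  match n with
  | 0%N => s
  | n'.+1 =>
      let s' := exec_upto kap n' s in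
      match (insub n' : option 'I_m) with
      | Some j => [ffun i => if i == j
                             then acoef L j (kap j) * s' j + evalp (upd L j (kap j)) s'
                             else s' i]
      | None => s'
      end
  end.

Definition body (kap : choice) (s : state) : state := exec_upto kap m s.

(* symbolic execution: the updated variables as polynomials in the old ones *)
Fixpoint sym_upto (kap : choice) (n : nat) : m.-tuple {mpoly R[m]} :=
  match n with
  | 0%N => [tuple 'X_i | i < m]
  | n'.+1 =>
      let t := sym_upto kap n' in
      match (insub n' : option 'I_m) with
      | Some j => [tuple if i == j
                         then (acoef L j (kap j))%:MP * tnth t j
                              + (upd L j (kap j) \mPo t)
                         else tnth t i | i < m]
      | None => t
      end
  end.

(* B_kappa for a polynomial H: H(s') = B_kappa(s) *)
Definition branch_poly (kap : choice) (H : {mpoly R[m]}) : {mpoly R[m]} :=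
  H \mPo sym_upto kap m.

Definition is_branch (H B : {mpoly R[m]}) : Prop :=
  0 < \sum_(kap : choice | branch_poly kap H == B) kprob kap.

(* The loop space.  A run prefix of length n+1 (states 0..n) is determined  *)
(* by the n choice vectors used in the first n iterations; its probability   *)
(* is the product of their probabilities.  When the guard fails the state is *)
(* repeated.  Events / random variables measurable w.r.t. F_n are functions  *)
(* of the prefix (a seq of n+1 states).                                      *)
Definition s0 : state := [ffun i => init L i].

Definition step (kap : choice) (s : state) : state :=
  if 0 < evalp G s then body kap s else s.

Fixpoint final (s : state) (ks : seq choice) : state :=
  match ks with
  | [::] => s
  | k :: ks' => final (step k s) ks'
  end.

Definition run (ks : seq choice) : seq state :=
  [seq final s0 (take t ks) | t <- iota 0 (size ks).+1].

Definition st (r : seq state) (i : nat) : state := nth s0 r i.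

Definition weight (ks : seq choice) : R := \prod_(k <- ks) kprob k.

(* P(A) for an event A in F_n, A given as a predicate on prefixes of length n+1 *)
Definition prob (n : nat) (A : seq state -> bool) : R :=
  \sum_(ks : n.-tuple choice) weight ks * (A (run ks))%:R.

Definition condprob (n : nat) (A B : seq state -> bool) : R :=
  prob n (fun r => A r && B r) / prob n B.

(* E(Y | F_n), for Y in F_(n+1), evaluated on the F_n-atom given by the
   prefix r (states 0..n) *)
Definition condexp (n : nat) (Y : seq state -> R) (r : seq state) : R :=
  (\sum_(ks : n.+1.-tuple choice | take n.+1 (run ks) == r)
      weight ks * Y (run ks)) / prob n (fun r' => r' == r).

Definition guard (i : nat) (r : seq state) : bool := 0 < evalp G (st r i).
Definition T_gt (i : nat) (r : seq state) : bool := all (fun j => guard j r) (iota 0 i.+1).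
Definition T_le (i : nat) (r : seq state) : bool := has (fun j => ~~ guard j r) (iota 0 i.+1).

(* AST: P(T < oo) = 1, where P(T < oo) = lim_i P(T <= i) *)
Definition AST : Prop :=
  forall e : R, 0 < e -> exists N : nat, forall i : nat, (N <= i)%N ->
    1 - e < prob i (T_le i).

(* An expression E is a family (E i) of F_i-measurable random variables *)
Definition upper_bounding (E : nat -> seq state -> R) (u : nat -> R) : Prop :=
  [/\ {homo u : x y / (x <= y)%N >-> x <= y} \/ {homo u : x y / (x <= y)%N >-> y <= x},
      (forall i, 0 <= u i) \/ (forall i, u i <= 0)
    & exists2 alpha : R, 0 < alpha &
        exists N : nat, forall i : nat, (N <= i)%N ->
          condprob i (fun r => E i r <= alpha * u i) (T_gt i) = 1].

Definition absolute_bounding (E : nat -> seq state -> R) (c : nat -> R) : Prop :=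
  upper_bounding (fun i r => `|E i r|) c.

Definition Eexp (i : nat) (r : seq state) : R :=
  condexp i (fun r' => - evalp G (st r' i.+1) + evalp G (st r' i)) r.

End Loop.

Arguments altprob {R m} L j k.
Arguments only_vars_below {R m} j p.
Arguments prob_solvable {R m} L.
Arguments G {R m} L.
Arguments state {R} m.
Arguments evalp {R m} p s.
Arguments choice {R m} L.
Arguments kprob {R m} L kap.
Arguments exec_upto {R m} L kap n s.
Arguments body {R m} L kap s.
Arguments sym_upto {R m} L kap n.
Arguments branch_poly {R m} L kap H.
Arguments is_branch {R m} L H B.
Arguments s0 {R m} L.
Arguments step {R m} L kap s.
Arguments final {R m} L s ks.
Arguments run {R m} L ks.
Arguments st {R m} L r i.
Arguments weight {R m} L ks.
Arguments prob {R m} L n A.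
Arguments condprob {R m} L n A B.
Arguments condexp {R m} L n Y r.
Arguments guard {R m} L i r.
Arguments T_gt {R m} L i r.
Arguments T_le {R m} L i r.
Arguments AST {R m} L.
Arguments upper_bounding {R m} L E u.
Arguments absolute_bounding {R m} L E c.
Arguments Eexp {R m} L i r.

From mathcomp Require Import all_boot all_order all_algebra.
From mathcomp Require Import reals.
From mathcomp Require Import mpoly.
From mathcomp.algebra_tactics Require Import ring lra.
Import Order.TTheory GRing.Theory Num.Theory.
Local Open Scope ring_scope.

Set Implicit Arguments.
Unset Strict Implicit.
Unset Printing Implicit Defensive.

(* Proof idea: hypothesis (i) makes the expected increase of G at least some
   eps > 0 from some time on, and (iii) bounds its increments on every branch by
   a constant K.  For a > 0 small enough, W = 1 / (1 + a G), frozen at 1 on the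
   runs whose guard fails at time i0, is then a supermartingale from time i0 on
   (second-order expansion of 1 / (y - x)); W is at least 1 on terminated runs,
   and E(W_i0) < 1 by (ii).  Hence P(T <= i) <= E(W_i) <= E(W_i0) < 1 for all
   i >= i0. *)

Lemma big_distr_dffun {R : comNzRingType} {I : finType} {T_ : I -> finType}
    (F : forall i, T_ i -> R) :
  \prod_(i : I) \sum_(j : T_ i) F i j =
  \sum_(f : {dffun forall i : I, T_ i}) \prod_(i : I) F i (f i).
Proof.
pose F_ i := [ffun j : T_ i => F i j].
transitivity (\prod_(i : I) \sum_(j in tagged_with T_ i) untag 0 (F_ i) j).
  apply: eq_bigr => i _; rewrite -(big_tag F_).
  by apply: eq_bigr => j _; rewrite ffunE.
rewrite bigA_distr_big_dep -big_fprod.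
rewrite (reindex (@fprod_of_dffun I T_)); last exact/onW_bij/fprod_of_dffun_bij.
apply: eq_bigr => f _; apply: eq_bigr => i _.
by rewrite ffunE /fprod_of_dffun fprodE.
Qed.

Lemma big_tuple0 {R : nmodType} {T : finType} (F : seq T -> R) :
  \sum_(t : 0.-tuple T) F t = F [::].
Proof. by rewrite (big_pred1 [tuple]) // => t /=; apply/esym/eqP; exact: tuple0. Qed.

Lemma big_tuple_cons {R : nmodType} {T : finType} n (F : seq T -> R) :
  \sum_(t : n.+1.-tuple T) F t = \sum_(x : T) \sum_(t : n.-tuple T) F (x :: t).
Proof.
rewrite pair_big /= (reindex (fun p : T * n.-tuple T => [tuple of p.1 :: p.2])) /=.
  by apply: eq_bigr => -[x t].
exists (fun t : n.+1.-tuple T => (thead t, [tuple of behead t])).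
  move=> [x t] /=; have -> : [tuple of behead (x :: t)] = t by apply: val_inj.
  by [].
by move=> t _; apply: val_inj; case: t => -[|x s].
Qed.

Lemma big_tuple_rcons {R : nmodType} {T : finType} n (F : seq T -> R) :
  \sum_(t : n.+1.-tuple T) F t = \sum_(t : n.-tuple T) \sum_(x : T) F (rcons t x).
Proof.
elim: n F => [|n IHn] F.
  rewrite big_tuple_cons (big_tuple0 (fun s => \sum_x F (rcons s x))).
  by apply: eq_bigr => x _; exact: (big_tuple0 (fun s => F (x :: s))).
rewrite big_tuple_cons (big_tuple_cons _ (fun t => \sum_x F (rcons t x))).
by apply: eq_bigr => x _; rewrite (IHn (fun s => F (x :: s))).
Qed.

Lemma evalpN (R : realType) (m : nat) (p : {mpoly R[m]}) s :
  evalp (- p) s = - evalp p s.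
Proof. exact: mevalN. Qed.

Lemma evalpD (R : realType) (m : nat) (p q : {mpoly R[m]}) s :
  evalp (p + q) s = evalp p s + evalp q s.
Proof. exact: mevalD. Qed.

Section Runs.
Variables (R : realType) (m : nat) (L : loop R m).

Local Notation final0 := (final L (s0 L)).

Lemma final_cat s ks1 ks2 : final L s (ks1 ++ ks2) = final L (final L s ks1) ks2.
Proof. by elim: ks1 s => //= k ks1 IH s. Qed.

Lemma final_rcons s ks k : final L s (rcons ks k) = step L k (final L s ks).
Proof. by rewrite -cats1 final_cat. Qed.

Lemma step_stop k s : ~~ (0 < evalp (G L) s) -> step L k s = s.
Proof. by rewrite /step => /negbTE ->. Qed.

Lemma final_stop s ks : ~~ (0 < evalp (G L) s) -> final L s ks = s.
Proof. by elim: ks => //= k ks IH H; rewrite step_stop // IH. Qed.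

Lemma size_run ks : size (run L ks) = (size ks).+1.
Proof. by rewrite size_map size_iota. Qed.

Lemma st_run ks t : (t <= size ks)%N -> st L (run L ks) t = final0 (take t ks).
Proof.
move=> ht; rewrite /st /run (nth_map 0%N); last by rewrite size_iota ltnS.
by rewrite nth_iota ?ltnS.
Qed.

Lemma st_run_size ks : st L (run L ks) (size ks) = final0 ks.
Proof. by rewrite st_run // take_size. Qed.

Lemma run_rcons ks k : run L (rcons ks k) = rcons (run L ks) (step L k (final0 ks)).
Proof.
rewrite /run size_rcons -[(size ks).+2]addn1 iotaD map_cat cats1; congr rcons.
  apply/eq_in_map => t; rewrite mem_iota add0n ltnS => /andP[_ ht].
  by rewrite -cats1 takel_cat.
by rewrite take_oversize ?size_rcons // final_rcons.
Qed.

Lemma st_rcons_run_size ks x : st L (rcons (run L ks) x) (size ks).+1 = x.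
Proof. by rewrite /st nth_rcons size_run ltnn eqxx. Qed.

Lemma st_rcons_run ks x : st L (rcons (run L ks) x) (size ks) = final0 ks.
Proof. by rewrite /st nth_rcons size_run ltnSn -/(st L _ _) st_run_size. Qed.

Lemma take_run_rcons ks k : take (size ks).+1 (run L (rcons ks k)) = run L ks.
Proof. by rewrite run_rcons -cats1 takel_cat ?size_run // take_oversize ?size_run. Qed.

Lemma guard_run ks t : (t <= size ks)%N ->
  guard L t (run L ks) = (0 < evalp (G L) (final0 (take t ks))).
Proof. by move=> ht; rewrite /guard st_run. Qed.

Lemma guard_run_size ks : guard L (size ks) (run L ks) = (0 < evalp (G L) (final0 ks)).
Proof. by rewrite guard_run // take_size. Qed.

Lemma guard_run_le ks j t : (j <= t)%N -> (t <= size ks)%N ->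
  guard L t (run L ks) -> guard L j (run L ks).
Proof.
move=> hjt hts; rewrite !guard_run ?(leq_trans hjt) //.
rewrite -(cat_take_drop j (take t ks)) take_takel // final_cat.
by apply: contraLR => H; rewrite final_stop.
Qed.

Lemma T_gt_run ks i : (i <= size ks)%N -> T_gt L i (run L ks) = guard L i (run L ks).
Proof.
move=> hi; apply/allP/idP => [H|H j]; first by apply: H; rewrite mem_iota add0n ltnS leqnn.
by rewrite mem_iota add0n ltnS => /andP[_ hj]; exact: guard_run_le H.
Qed.

Lemma T_le_run ks i : (i <= size ks)%N -> T_le L i (run L ks) = ~~ guard L i (run L ks).
Proof. by move=> hi; rewrite -T_gt_run // /T_le /T_gt -has_predC. Qed.

Lemma sym_upto_correct kap n s i :
  evalp (tnth (sym_upto L kap n) i) s = exec_upto L kap n s i.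
Proof.
elim: n i => [|n IHn] i /=; first by rewrite tnth_mktuple /evalp mevalXU.
destruct (insub n : option 'I_m) as [j|]; last exact: IHn.
rewrite tnth_mktuple ffunE; case: eqP => [Eij|_]; last exact: IHn.
subst i.
rewrite /evalp mevalD mevalM mevalC comp_mpoly_meval -!/(evalp _ _) IHn.
by congr (_ + _); apply: meval_eq => k; rewrite -/(evalp _ _) IHn.
Qed.

Lemma branch_polyE kap H s : evalp (branch_poly L kap H) s = evalp H (body L kap s).
Proof.
rewrite /branch_poly /evalp comp_mpoly_meval; apply: meval_eq => k.
exact: sym_upto_correct.
Qed.

End Runs.

Section Expectation.
Variables (R : realType) (m : nat) (L : loop R m).
Hypothesis PS : prob_solvable L.

Lemma altprob_ge0 j k : 0 <= altprob L j k.
Proof.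
case: PS => _ _ prb01 prb_lt1 _; rewrite /altprob; case: ifP => [lt|_].
  by case/andP: (prb01 j k lt).
by rewrite subr_ge0 ltW.
Qed.

Lemma sum_altprob j : \sum_k altprob L j k = 1.
Proof.
case: PS => nalt_gt0 _ _ _ _; have n_gt0 := nalt_gt0 j.
rewrite (bigID (fun k : 'I_(nalt L j) => (k.+1 < nalt L j)%N)) /= /altprob.
under eq_bigr => k -> do [].
have klast : ((nalt L j).-1 < nalt L j)%N by rewrite prednK.
rewrite [X in _ + X](big_pred1 (Ordinal klast)) /=.
  by rewrite prednK // ltnn addrC subrK.
move=> k /=; rewrite -leqNgt; apply/idP/eqP => [hk|->]; last by rewrite /= prednK.
by apply: val_inj; apply/eqP; rewrite /= eqn_leq -ltnS prednK // ltn_ord -ltnS prednK.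
Qed.

Lemma kprob_ge0 k : 0 <= kprob L k.
Proof. by apply: prodr_ge0 => j _; apply: altprob_ge0. Qed.

Lemma sum_kprob : \sum_k kprob L k = 1.
Proof.
rewrite /kprob -(big_distr_dffun (fun j k => altprob L j k)).
by apply: big1 => j _; apply: sum_altprob.
Qed.

Lemma weight_ge0 ks : 0 <= weight L ks.
Proof. by apply: prodr_ge0 => k _; apply: kprob_ge0. Qed.

Lemma weight_rcons ks k : weight L (rcons ks k) = weight L ks * kprob L k.
Proof. by rewrite /weight -cats1 big_cat big_seq1. Qed.

Lemma weight_rcons_gt0 ks k : 0 < weight L (rcons ks k) ->
  0 < weight L ks /\ 0 < kprob L k.
Proof.
rewrite weight_rcons => w_gt0; have w_ge0 := weight_ge0 ks; have k_ge0 := kprob_ge0 k.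
by split; rewrite lt_def ?w_ge0 ?k_ge0 andbT; apply: contraTneq w_gt0 => ->;
  rewrite ?mul0r ?mulr0 ltxx.
Qed.

Definition expect n (f : seq (choice L) -> R) : R :=
  \sum_(ks : n.-tuple (choice L)) weight L ks * f ks.

Lemma expectS n f :
  expect n.+1 f = expect n (fun ks => \sum_k kprob L k * f (rcons ks k)).
Proof.
rewrite /expect (big_tuple_rcons _ (fun s => weight L s * f s)).
apply: eq_bigr => ks _; rewrite big_distrr; apply: eq_bigr => k _.
by rewrite weight_rcons -mulrA.
Qed.

Lemma expect1 n : expect n (fun _ => 1) = 1.
Proof.
elim: n => [|n IHn].
  by rewrite /expect (big_tuple0 (fun s => weight L s * 1)) /weight big_nil mulr1.
by rewrite expectS -[RHS]IHn; apply: eq_bigr => ks _;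
  under eq_bigr do rewrite mulr1; rewrite sum_kprob.
Qed.

Lemma ler_expect n f g :
  (forall ks, size ks = n -> 0 < weight L ks -> f ks <= g ks) ->
  expect n f <= expect n g.
Proof.
move=> fg; apply: ler_sum => ks _.
have := weight_ge0 ks; rewrite le0r => /orP[/eqP->|w_gt0]; first by rewrite !mul0r.
by rewrite ler_pM2l // fg // size_tuple.
Qed.

Lemma eq_expect n f g :
  (forall ks, size ks = n -> 0 < weight L ks -> f ks = g ks) ->
  expect n f = expect n g.
Proof. by move=> fg; apply/le_anti; rewrite !ler_expect // => ks ? ?; rewrite fg. Qed.

Lemma expectD n f g : expect n (fun ks => f ks + g ks) = expect n f + expect n g.
Proof. by rewrite /expect -big_split; apply: eq_bigr => ks _; rewrite mulrDr. Qed.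

Lemma expectN n f : expect n (fun ks => - f ks) = - expect n f.
Proof. by rewrite /expect -sumrN; apply: eq_bigr => ks _; rewrite mulrN. Qed.

Lemma expect_eq0 n f : (forall ks, 0 <= f ks) -> expect n f = 0 ->
  forall ks, size ks = n -> 0 < weight L ks -> f ks = 0.
Proof.
move=> f_ge0 Ef0 ks /eqP ks_n w_gt0.
have := psumr_eq0P (fun (t : n.-tuple (choice L)) _ =>
  mulr_ge0 (weight_ge0 t) (f_ge0 t)) Ef0 (i := Tuple ks_n) isT.
by move=> /eqP; rewrite mulf_eq0 gt_eqF //= => /eqP.
Qed.

Lemma ltr_expect n f g ks : size ks = n -> 0 < weight L ks -> f ks < g ks ->
  (forall ks', size ks' = n -> 0 < weight L ks' -> f ks' <= g ks') ->
  expect n f < expect n g.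
Proof.
move=> /eqP ks_n w_gt0 fg_lt fg_le.
have term_ge0 (t : n.-tuple (choice L)) : 0 <= weight L t * (g t - f t).
  have := weight_ge0 t; rewrite le0r => /orP[/eqP->|wt]; first by rewrite mul0r.
  by rewrite mulr_ge0 ?(ltW wt) // subr_ge0 fg_le ?size_tuple.
rewrite -subr_gt0 -expectN -expectD /expect (bigD1 (Tuple ks_n)) //=.
have rest_ge0 : 0 <= \sum_(t | t != Tuple ks_n) weight L t * (g t - f t).
  by apply: sumr_ge0 => t _; exact: term_ge0.
have : 0 < weight L ks * (g ks - f ks) by rewrite mulr_gt0 // subr_gt0.
lra.
Qed.

Lemma prob_expect n A : prob L n A = expect n (fun ks => (A (run L ks))%:R).
Proof. by []. Qed.

Lemma prob_eq1 n (A : seq (state m) -> bool) :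
  (forall ks, size ks = n -> 0 < weight L ks -> A (run L ks)) -> prob L n A = 1.
Proof.
move=> As; rewrite prob_expect -[RHS](expect1 n).
by apply: eq_expect => ks ks_n w_gt0; rewrite As.
Qed.

Lemma prob_gt0P n A : 0 < prob L n A ->
  exists2 ks, size ks = n /\ 0 < weight L ks & A (run L ks).
Proof.
case: (pickP (fun t : n.-tuple (choice L) => (0 < weight L t) && A (run L t))).
  by move=> t /andP[w_gt0 At] _; exists t; rewrite ?size_tuple.
move=> none; rewrite /prob big1 ?ltxx // => t _.
case At: (A _); last by rewrite mulr0.
have : ~~ (0 < weight L t) by rewrite -[_ < _]andbT -At none.
by rewrite lt_def weight_ge0 andbT negbK => /eqP->; rewrite mul0r.
Qed.

Lemma condprob_eq1 n (A B : seq (state m) -> bool) :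
  prob L n B != 0 -> condprob L n A B = 1 ->
  forall ks, size ks = n -> 0 < weight L ks -> B (run L ks) -> A (run L ks).
Proof.
move=> PB_neq0; rewrite /condprob => /(congr1 ( *%R^~ (prob L n B))).
rewrite mul1r mulfVK // => PAB ks ks_n w_gt0 Bks.
pose f ks := (B (run L ks))%:R - (A (run L ks) && B (run L ks))%:R : R.
have f_ge0 ks' : 0 <= f ks'.
  by rewrite /f; case: (B _); case: (A _); rewrite /= ?subrr ?subr0.
have Ef0 : expect n f = 0.
  rewrite expectD expectN -(prob_expect _ B).
  by rewrite -(prob_expect _ (fun r => A r && B r)) PAB subrr.
move: (expect_eq0 f_ge0 Ef0 ks_n w_gt0); rewrite /f Bks andbT.
by case: (A _) => //= /eqP; rewrite subr0 oner_eq0.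
Qed.

Lemma prob_run_gt0 ks : 0 < weight L ks ->
  0 < prob L (size ks) (fun r => r == run L ks).
Proof.
move=> w_gt0; rewrite lt_def; apply/andP; split; last first.
  by apply: sumr_ge0 => t _; rewrite mulr_ge0 ?weight_ge0.
apply: contra_neq (@oner_neq0 R) => P0.
have := expect_eq0 (f := fun t => (run L t == run L ks)%:R) (fun t => ler0n _ _) P0.
by move=> /(_ ks (erefl _) w_gt0); rewrite eqxx.
Qed.

Lemma condexp_run Y ks : 0 < weight L ks ->
  condexp L (size ks) Y (run L ks) =
  \sum_k kprob L k * Y (rcons (run L ks) (step L k (final L (s0 L) ks))).
Proof.
move=> w_gt0; set n := size ks; set EY := \sum_k _.
have atom_sum : \sum_(t : n.+1.-tuple (choice L) | take n.+1 (run L t) == run L ks)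
      weight L t * Y (run L t) =
    expect n.+1 (fun t => (take n.+1 (run L t) == run L ks)%:R * Y (run L t)).
  rewrite /expect big_mkcond; apply: eq_bigr => t _.
  by case: ifP => _; rewrite ?mul1r ?mul0r ?mulr0.
have atom_expect : expect n.+1
      (fun t => (take n.+1 (run L t) == run L ks)%:R * Y (run L t)) =
    expect n (fun t => (run L t == run L ks)%:R * EY).
  rewrite expectS; apply: eq_expect => t t_n _.
  have [Et|NEt] := eqVneq (run L t) (run L ks); last first.
    by rewrite mul0r big1 // => k _; rewrite -t_n take_run_rcons (negbTE NEt) mul0r mulr0.
  have Efin : final L (s0 L) t = final L (s0 L) ks.
    by rewrite -st_run_size Et t_n st_run_size.
  rewrite mul1r; apply: eq_bigr => k _.
  by rewrite -t_n take_run_rcons Et eqxx mul1r run_rcons Et Efin.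
have atom_prob : expect n (fun t => (run L t == run L ks)%:R * EY) =
    prob L n (fun r => r == run L ks) * EY.
  by rewrite /prob big_distrl; apply: eq_bigr => t _; rewrite mulrA.
rewrite /condexp atom_sum atom_expect atom_prob mulrAC divff ?mul1r //.
by rewrite gt_eqF // prob_run_gt0.
Qed.

End Expectation.

Lemma invf_sub_le_expansion (R : realFieldType) (y x e : R) :
  0 < y -> `|x| <= e -> e <= y / 2 ->
  (y - x)^-1 <= y^-1 + x / y ^+ 2 + 2 * e ^+ 2 / y ^+ 3.
Proof.
move=> y_gt0 xe ey.
have [xl xu] : - e <= x /\ x <= e by move: xe; rewrite ler_norml => /andP[].
have e_ge0 : 0 <= e by apply: le_trans xe.
have yx_gt0 : 0 < y - x by lra.
rewrite -subr_ge0.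
have -> : y^-1 + x / y ^+ 2 + 2 * e ^+ 2 / y ^+ 3 - (y - x)^-1 =
    ((e ^+ 2 - x ^+ 2) * y + e ^+ 2 * (y - 2 * x)) / (y ^+ 3 * (y - x)).
  by field; rewrite !gt_eqF.
apply: divr_ge0; last by rewrite ltW // mulr_gt0 // exprn_gt0.
apply: addr_ge0; apply: mulr_ge0; rewrite ?sqr_ge0 //; try lra.
by rewrite subr_sqr; apply: mulr_ge0; lra.
Qed.

Lemma expansion_le_invf (R : realFieldType) (a c y D eps : R) :
  0 < a -> 1 <= y -> D <= - eps -> 2 * a * c ^+ 2 <= eps ->
  y^-1 + a * D / y ^+ 2 + 2 * (a * c) ^+ 2 / y ^+ 3 <= y^-1.
Proof.
move=> a_gt0 y_ge1 D_le eps_ge.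
have y_gt0 : 0 < y by lra.
have -> : y^-1 + a * D / y ^+ 2 + 2 * (a * c) ^+ 2 / y ^+ 3 =
    y^-1 + a / y ^+ 2 * (D + 2 * a * c ^+ 2 / y) by field; rewrite gt_eqF.
rewrite gerDl mulr_ge0_le0 // ?divr_ge0 ?exprn_ge0 // ?(ltW a_gt0) ?(ltW y_gt0) //.
suff : 2 * a * c ^+ 2 / y <= 2 * a * c ^+ 2 by lra.
by rewrite ler_pdivrMr // ler_peMr // mulr_ge0 ?sqr_ge0 // mulr_ge0 // ltW.
Qed.

Section Repulsion.
Variables (R : realType) (m : nat) (L : loop R m).

Local Notation Gv s := (evalp (G L) s).
Local Notation final0 := (final L (s0 L)).

Definition guard_drop (k : choice L) (s : state m) : R := Gv s - Gv (body L k s).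

Definition drift_le_from (i0 : nat) (eps : R) : Prop :=
  forall ks, (i0 <= size ks)%N -> 0 < weight L ks -> 0 < Gv (final0 ks) ->
    \sum_k kprob L k * guard_drop k (final0 ks) <= - eps.

Definition drops_bounded_from (i0 : nat) (K : R) : Prop :=
  forall ks k, (i0 <= size ks)%N -> 0 < weight L ks -> 0 < Gv (final0 ks) ->
    0 < kprob L k -> `|guard_drop k (final0 ks)| <= K.

Lemma drift_le_from_le i j eps : (i <= j)%N -> drift_le_from i eps -> drift_le_from j eps.
Proof. by move=> ij D ks jks; apply/D/(leq_trans ij). Qed.

Lemma drops_bounded_from_le i j K :
  (i <= j)%N -> drops_bounded_from i K -> drops_bounded_from j K.
Proof. by move=> ij D ks k jks; apply/D/(leq_trans ij). Qed.

Hypothesis PS : prob_solvable L.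
Variables (i0 : nat) (eps K : R).
Hypotheses (eps_gt0 : 0 < eps) (K_ge0 : 0 <= K).
Hypotheses (drift_i0 : drift_le_from i0 eps) (drops_i0 : drops_bounded_from i0 K).
Hypothesis guard_i0 : 0 < prob L i0 (guard L i0).

Lemma repulsing_conditions :
  0 < prob L i0 (fun r => evalp (- G L) (st L r i0) < 0) /\
  forall i : nat, (i0 <= i)%N ->
    [/\ prob L i (fun r => ~~ guard L i r ==> (0 <= evalp (- G L) (st L r i))) = 1,
        prob L i (fun r => guard L i r ==>
          (condexp L i (fun r' => evalp (- G L) (st L r' i.+1)
                                  - evalp (- G L) (st L r' i)) r <= - eps)) = 1
      & prob L i.+1 (fun r => `|evalp (- G L) (st L r i.+1)
                               - evalp (- G L) (st L r i)| < K + 1) = 1].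
Proof.
split.
  by congr (0 < _): guard_i0; apply: eq_bigr => t _; rewrite evalpN oppr_lt0.
move=> i i0_i; split.
- by apply: (prob_eq1 PS) => ks _ _; rewrite /guard evalpN oppr_ge0 -leNgt implybb.
- apply: (prob_eq1 PS) => ks ks_i w_gt0; subst i.
  rewrite guard_run_size; apply/implyP => G_gt0.
  rewrite (condexp_run PS) //.
  under eq_bigr => k _ do
    rewrite st_rcons_run_size st_rcons_run /step G_gt0 !evalpN opprK addrC.
  exact: drift_i0 i0_i w_gt0 G_gt0.
- apply: (prob_eq1 PS) => ks; case/lastP: ks => [|ks k] //; rewrite size_rcons.
  move=> [ks_i] /(weight_rcons_gt0 PS)[w_gt0 k_gt0]; subst i.
  rewrite run_rcons st_rcons_run_size st_rcons_run /step !evalpN.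
  case: ifP => [G_gt0|_]; last by rewrite subrr normr0 ltr_wpDl.
  rewrite opprK addrC; have := drops_i0 i0_i w_gt0 G_gt0 k_gt0.
  by rewrite /guard_drop; lra.
Qed.

Let c := K + 1.

Let c_gt0 : 0 < c. Proof. exact: ltr_wpDl K_ge0 ltr01. Qed.

(* [a * c <= 1/2] keeps [1 + a G] away from 0 since [G > - c] on the runs that
   matter, and [2 a c^2 <= eps] lets the drift dominate the second-order term. *)
Let a := Num.min (1 / (2 * c)) (eps / (2 * c ^+ 2)).

Let a_gt0 : 0 < a.
Proof. by rewrite lt_min !divr_gt0 ?mulr_gt0 ?exprn_gt0. Qed.

Let ac_le : a * c <= 1 / 2.
Proof.
have -> : 1 / 2 = 1 / (2 * c) * c by field; rewrite gt_eqF.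
by rewrite ler_pM2r // ge_min lexx.
Qed.

Let ac2_le : 2 * a * c ^+ 2 <= eps.
Proof.
have -> : eps = eps / (2 * c ^+ 2) * (2 * c ^+ 2) by field; rewrite gt_eqF.
have -> : 2 * a * c ^+ 2 = a * (2 * c ^+ 2) by ring.
by rewrite ler_pM2r ?mulr_gt0 ?exprn_gt0 // ge_min lexx orbT.
Qed.

Let guard_i0_run (ks : seq (choice L)) := 0 < Gv (final0 (take i0 ks)).

Let W (ks : seq (choice L)) : R :=
  if guard_i0_run ks then (1 + a * Gv (final0 ks))^-1 else 1.

Let guard_i0_run_rcons ks k :
  (i0 <= size ks)%N -> guard_i0_run (rcons ks k) = guard_i0_run ks.
Proof. by move=> i0_ks; rewrite /guard_i0_run -cats1 takel_cat. Qed.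

(* G can become nonpositive only at the step where the guard fails, and that
   step lowers it by at most K < c. *)
Lemma G_gt_neg_c ks : (i0 <= size ks)%N -> 0 < weight L ks -> guard_i0_run ks ->
  - c < Gv (final0 ks).
Proof.
elim/last_ind: ks => [|ks k IHks] i0_ks w_gt0 g_i0.
  by move: g_i0; rewrite /guard_i0_run take_oversize // => G_gt0; have := c_gt0; lra.
have [i0_ks'|] := leqP i0 (size ks); last first.
  move=> ks_i0; move: g_i0; rewrite /guard_i0_run.
  have -> : i0 = size (rcons ks k) by apply/eqP; rewrite eqn_leq i0_ks size_rcons.
  by rewrite take_size => G_gt0; have := c_gt0; lra.
have [w_gt0' k_gt0] := weight_rcons_gt0 PS w_gt0.
rewrite guard_i0_run_rcons // in g_i0.
rewrite final_rcons /step; case: ifP => [G_gt0|_]; last exact: IHks.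
have := drops_i0 i0_ks' w_gt0' G_gt0 k_gt0; rewrite /guard_drop ler_norml.
by rewrite /c; lra.
Qed.

Lemma W_step_le ks : (i0 <= size ks)%N -> 0 < weight L ks ->
  \sum_k kprob L k * W (rcons ks k) <= W ks.
Proof.
move=> i0_ks w_gt0; rewrite /W; case: ifP => g_i0; last first.
  under eq_bigr => k _ do rewrite guard_i0_run_rcons // g_i0 mulr1.
  by rewrite (sum_kprob PS).
under eq_bigr => k _ do rewrite guard_i0_run_rcons // g_i0 final_rcons.
set s := final0 ks; have [G_gt0|G_le0] := boolP (0 < Gv s); last first.
  under eq_bigr => k _ do rewrite step_stop //.
  by rewrite -big_distrl /= (sum_kprob PS) mul1r.
rewrite /step G_gt0; set y := 1 + a * Gv s.
have y_ge1 : 1 <= y by rewrite /y; have := a_gt0; nra.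
have term_le k : kprob L k * (1 + a * Gv (body L k s))^-1 <=
    kprob L k * (y^-1 + a * guard_drop k s / y ^+ 2 + 2 * (a * c) ^+ 2 / y ^+ 3).
  have := kprob_ge0 PS k; rewrite le0r => /orP[/eqP->|k_gt0]; first by rewrite !mul0r.
  rewrite ler_pM2l // (_ : 1 + _ = y - a * guard_drop k s); last first.
    by rewrite /y /guard_drop; ring.
  apply: invf_sub_le_expansion; first by lra.
    rewrite normrM gtr0_norm // ler_pM2l //.
    by apply: le_trans (drops_i0 i0_ks w_gt0 G_gt0 k_gt0) _; rewrite /c; lra.
  by have := ac_le; lra.
apply: le_trans (ler_sum _ (fun k _ => term_le k)) _.
set D := \sum_k kprob L k * guard_drop k s.
have -> : \sum_k kprob L k * (y^-1 + a * guard_drop k s / y ^+ 2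
      + 2 * (a * c) ^+ 2 / y ^+ 3) =
    (\sum_k kprob L k) * (y^-1 + 2 * (a * c) ^+ 2 / y ^+ 3) + a / y ^+ 2 * D.
  by rewrite /D mulr_suml mulr_sumr -big_split; apply: eq_bigr => k _ /=; ring.
rewrite (sum_kprob PS) mul1r.
have -> : y^-1 + 2 * (a * c) ^+ 2 / y ^+ 3 + a / y ^+ 2 * D =
    y^-1 + a * D / y ^+ 2 + 2 * (a * c) ^+ 2 / y ^+ 3 by ring.
exact: expansion_le_invf a_gt0 y_ge1 (drift_i0 i0_ks w_gt0 G_gt0) ac2_le.
Qed.

Lemma expect_W_le n : (i0 <= n)%N -> expect n W <= expect i0 W.
Proof.
move=> /subnK <-; elim: (n - i0)%N => [|t IHt] //.
rewrite addSn expectS; apply: le_trans IHt; apply: (ler_expect PS) => ks ks_t w_gt0.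
by apply: W_step_le; rewrite // ks_t leq_addl.
Qed.

Lemma terminated_le_W ks : (i0 <= size ks)%N -> 0 < weight L ks ->
  (~~ guard L (size ks) (run L ks))%:R <= W ks.
Proof.
move=> i0_ks w_gt0; rewrite /W guard_run_size; case: ifP => g_i0; last by case: (~~ _).
have := G_gt_neg_c i0_ks w_gt0 g_i0; set x := Gv (final0 ks) => x_gt.
have y_gt0 : 0 < 1 + a * x.
  have : - (a * c) < a * x by rewrite -mulrN ltr_pM2l.
  by have := ac_le; lra.
have [x_gt0|x_le0] := boolP (0 < x); first by rewrite /= ltW // invr_gt0.
rewrite /= invf_ge1 //; suff : a * x <= 0 by lra.
by rewrite pmulr_rle0 // leNgt.
Qed.

Lemma expect_W_i0_lt1 : expect i0 W < 1.
Proof.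
have [ks [ks_i0 w_gt0] g_ks] := prob_gt0P PS guard_i0.
have W_i0 ks' : size ks' = i0 ->
    W ks' = if 0 < Gv (final0 ks') then (1 + a * Gv (final0 ks'))^-1 else 1.
  by move=> ks'_i0; rewrite /W /guard_i0_run -ks'_i0 take_size.
rewrite -(expect1 PS i0); apply: (ltr_expect PS ks_i0 w_gt0).
  move: g_ks; rewrite W_i0 // -ks_i0 guard_run_size => G_gt0; rewrite G_gt0.
  have aG_gt0 : 0 < a * Gv (final0 ks) by rewrite mulr_gt0.
  by rewrite invf_lt1 ?ltrDl //; lra.
move=> ks' ks'_i0 _; rewrite W_i0 //; case: ifP => // G_gt0.
have aG_gt0 : 0 < a * Gv (final0 ks') by rewrite mulr_gt0.
by rewrite invf_le1 ?lerDl ?ltW //; lra.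
Qed.

Lemma not_AST : ~ AST L.
Proof.
have delta_gt0 : 0 < 1 - expect i0 W by rewrite subr_gt0 expect_W_i0_lt1.
move=> /(_ _ delta_gt0) [N /(_ (maxn N i0) (leq_maxl _ _))].
have i0_le := leq_maxr N i0; set i := maxn N i0.
rewrite opprB addrC subrK ltNge => /negP; apply.
apply: le_trans (expect_W_le i0_le); rewrite prob_expect.
apply: (ler_expect PS) => ks ks_i w_gt0; rewrite T_le_run -ks_i //.
by apply: terminated_le_W; rewrite // ks_i.
Qed.

End Repulsion.

Section BoundingFunctions.
Variables (R : realType) (m : nat) (L : loop R m).
Hypothesis PS : prob_solvable L.
Hypothesis guard_pos : forall i, 0 < prob L i (guard L i).

Local Notation Gv s := (evalp (G L) s).
Local Notation final0 := (final L (s0 L)).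

Lemma condprob_T_gt_eq1 i A : condprob L i A (T_gt L i) = 1 ->
  forall ks, size ks = i -> 0 < weight L ks -> 0 < Gv (final0 ks) -> A (run L ks).
Proof.
move=> PA ks ks_i w_gt0 G_gt0; subst i.
have PT_neq0 : prob L (size ks) (T_gt L (size ks)) != 0.
  rewrite gt_eqF //; congr (0 < _): (guard_pos (size ks)).
  by apply: eq_bigr => t _; rewrite T_gt_run // size_tuple.
by apply: (condprob_eq1 PS PT_neq0 PA) => //; rewrite T_gt_run // guard_run_size.
Qed.

Lemma Eexp_run ks : 0 < weight L ks -> 0 < Gv (final0 ks) ->
  Eexp L (size ks) (run L ks) = \sum_k kprob L k * guard_drop k (final0 ks).
Proof.
move=> w_gt0 G_gt0; rewrite /Eexp (condexp_run PS) //; apply: eq_bigr => k _.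
by rewrite st_rcons_run_size st_rcons_run /step G_gt0 addrC.
Qed.

Lemma drift_le_from_Eexp u : upper_bounding L (Eexp L) u ->
  (exists2 kappa : R, 0 < kappa &
     exists i1 : nat, forall i : nat, (i1 <= i)%N -> u i <= - kappa) ->
  exists i0, exists2 eps, 0 < eps & drift_le_from L i0 eps.
Proof.
move=> [_ _ [alpha alpha_gt0 [N Eexp_le]]] [kappa kappa_gt0 [i1 u_le]].
exists (maxn N i1), (alpha * kappa); first exact: mulr_gt0.
move=> ks; rewrite geq_max => /andP[N_ks i1_ks] w_gt0 G_gt0.
have := condprob_T_gt_eq1 (Eexp_le _ N_ks) (erefl _) w_gt0 G_gt0.
rewrite Eexp_run // => /le_trans; apply.
by rewrite -mulrN ler_pM2l // u_le.
Qed.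

Lemma drops_bounded_from_branches (c : {mpoly R[m]} -> nat -> R) (C : R) (i2 : nat) :
  (forall B, is_branch L (- G L) B ->
     absolute_bounding L (fun i r => evalp (B + G L) (st L r i)) (c B)) ->
  (forall B, is_branch L (- G L) B -> forall i, (i2 <= i)%N -> c B i <= C) ->
  exists i0, exists2 K, 0 <= K & drops_bounded_from L i0 K.
Proof.
move=> c_abs c_le.
have branch_bound (k : choice L) : exists NK : nat * R, 0 <= NK.2 /\
    forall ks, (NK.1 <= size ks)%N -> 0 < weight L ks -> 0 < Gv (final0 ks) ->
      0 < kprob L k -> `|guard_drop k (final0 ks)| <= NK.2.
  have [k_gt0|k_le0] := boolP (0 < kprob L k); last first.
    by exists (0%N, 0); split => // ks _ _ _ k_gt0; rewrite k_gt0 in k_le0.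
  have B_branch : is_branch L (- G L) (branch_poly L k (- G L)).
    rewrite /is_branch (bigD1 k) ?eqxx //= ltr_pwDl //.
    by apply: sumr_ge0 => k' _; apply: kprob_ge0.
  have [_ _ [alpha alpha_gt0 [N drop_le]]] := c_abs _ B_branch.
  exists (maxn N i2, alpha * `|C|); split; first by rewrite mulr_ge0 // ltW.
  move=> ks /=; rewrite geq_max => /andP[N_ks i2_ks] w_gt0 G_gt0 _.
  have := condprob_T_gt_eq1 (drop_le _ N_ks) (erefl _) w_gt0 G_gt0.
  rewrite st_run_size evalpD branch_polyE evalpN addrC => /le_trans; apply.
  by rewrite ler_pM2l // (le_trans (c_le _ B_branch _ i2_ks)) ?ler_norm.
have [NK NK_bound] := fin_all_exists branch_bound.
exists (\max_k (NK k).1)%N, (\big[Num.max/0]_k (NK k).2).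
  apply: (big_ind (fun x : R => 0 <= x)) => // [x y x_ge0 _|k _].
    by rewrite le_max x_ge0.
  exact: (NK_bound k).1.
move=> ks k N_ks w_gt0 G_gt0 k_gt0.
apply: le_trans ((NK_bound k).2 ks _ w_gt0 G_gt0 k_gt0) _.
  exact: leq_trans (le_bigmax _ (fun k => (NK k).1) k) N_ks.
exact: le_bigmax _ (fun k => (NK k).2) k.
Qed.

End BoundingFunctions.

Theorem mainTheorem6 (R : realType) (m : nat) (L : loop R m) (u : nat -> R) :
  prob_solvable L ->
  (* (i) *)
  upper_bounding L (Eexp L) u ->
  (exists2 kappa : R, 0 < kappa &
     exists i1 : nat, forall i : nat, (i1 <= i)%N -> u i <= - kappa) ->
  (* (ii) *)
  (forall i : nat, 0 < prob L i (guard L i)) ->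
  (* (iii) *)
  (exists c : {mpoly R[m]} -> nat -> R,
     (forall B, is_branch L (- G L) B ->
        absolute_bounding L (fun i r => evalp (B + G L) (st L r i)) (c B)) /\
     exists (C : R) (i2 : nat), forall B, is_branch L (- G L) B ->
        forall i : nat, (i2 <= i)%N -> c B i <= C) ->
  (* conclusion: M := -G satisfies the relaxed Repulsing-AST-rule, and L is not AST *)
  (exists (i0 : nat) (eps c : R),
     [/\ 0 < eps, 0 < c,
         0 < prob L i0 (fun r => evalp (- G L) (st L r i0) < 0)
       & forall i : nat, (i0 <= i)%N ->
         [/\ prob L i (fun r => ~~ guard L i r ==> (0 <= evalp (- G L) (st L r i))) = 1,
             prob L i (fun r => guard L i r ==>
                (condexp L i (fun r' => evalp (- G L) (st L r' i.+1)
                                        - evalp (- G L) (st L r' i)) r <= - eps)) = 1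
           & prob L i.+1 (fun r => `|evalp (- G L) (st L r i.+1)
                                      - evalp (- G L) (st L r i)| < c) = 1]])
  /\ ~ AST L.
Proof.
move=> PS u_bound u_neg guard_pos [c [c_abs [C [i2 c_le]]]].
have [N1 [eps eps_gt0 drift_N1]] := drift_le_from_Eexp PS guard_pos u_bound u_neg.
have [N2 [K K_ge0 drops_N2]] := drops_bounded_from_branches PS guard_pos c_abs c_le.
have drift_i0 := drift_le_from_le (leq_maxl N1 N2) drift_N1.
have drops_i0 := drops_bounded_from_le (leq_maxr N1 N2) drops_N2.
have guard_i0 := guard_pos (maxn N1 N2).
split; last exact: (not_AST PS eps_gt0 K_ge0 drift_i0 drops_i0).
have [M_neg M_rule] := repulsing_conditions PS K_ge0 drift_i0 drops_i0 guard_i0.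
by exists (maxn N1 N2), eps, (K + 1); split; rewrite // ltr_wpDl.
Qed.
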